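(* Let $n\ge 1$, let $a(x),b(x)\in R_n=\mathbb{F}_2[x]/\langle x^n-1\rangle$, and let $C=\langle a(x)+\omega b(x)\rangle\subseteq\mathbb{F}_4^n$ be the one-generator additive cyclic code they define, with $\dim_{\mathbb{F}_2}(C)=k$. Then there exists a binary quantum stabilizer code, which is a generalized bicycle code, with parameters $[[2n,\,2(n-k),\,d]]$, where $$d\ \ge\ d\big((C^R)^{\perp_s}\setminus C\big)\ \ge\ d\big((C^R)^{\perp_s}\big).$$ In particular, if $C$ is palindromic, i.e. $C=C^R$, then $d\ge d(C^{\perp_s}\setminus C)\ge d(C^{\perp_s})$.
   Context: $\mathbb{F}_4=\{0,1,\omega,\omega^2\}$ with $\omega^2=\omega+1$. Vectors of $\mathbb{F}_4^n$ are written as polynomials $\sum_{i=0}^{n-1}v_ix^i$ with $v_i\in\mathbb{F}_4$, indices modulo $n$; every such vector is uniquely $m(x)+\omega n(x)$ with $m,n\in R_n$ (binary polynomials). An additive code is an $\mathbb{F}_2$-subspace of $\mathbb{F}_4^n$; $\langle a(x)+\omega b(x)\rangle$ denotes the $\mathbb{F}_2$-span of $\{x^i(a(x)+\omega b(x)):0\le i\le n-1\}$ (products computed modulo $x^n-1$). The reciprocal code is $C^R=\langle a(x^{-1})+\omega b(x^{-1})\rangle$, where $x^{-1}=x^{n-1}$ in $R_n$. The symplectic inner product of $(a_i+\omega b_i)_i$ and $(c_i+\omega d_i)_i$ (with $a_i,b_i,c_i,d_i\in\mathbb{F}_2$) is $\sum_i (a_id_i+b_ic_i)\in\mathbb{F}_2$,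 and $D^{\perp_s}$ denotes the set of vectors symplectically orthogonal to all of an additive code $D$. For a set $S$ of vectors, $d(S)$ is the minimum Hamming weight (number of nonzero coordinates) of a nonzero element of $S$. A generalized bicycle (GB) code defined by $a(x),b(x)\in R_n$ is the CSS code on $2n$ qubits whose X-stabilizer group corresponds to $\{(c(x)a(x),c(x)b(x)):c\in R_n\}\subseteq\mathbb{F}_2^{2n}$ and Z-stabilizer group to $\{(c(x)b(x^{-1}),c(x)a(x^{-1})):c\in R_n\}$; an $[[N,K,D]]$ code has $N$ physical qubits, $K$ logical qubits and minimum distance $D$. *)

From HB Require Import structures.
From mathcomp Require Import all_boot all_order all_algebra.
Set Implicit Arguments.
Unset Strict Implicit.
Unset Printing Implicit Defensive.
Import GRing.Theory.
Local Open Scope ring_scope.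

(* R_n = F_2[x]/<x^n - 1>: a binary polynomial sum_{i<n} p_i x^i is its
   coefficient row vector p : 'rV['F_2]_n. *)

Definition cmul (n : nat) (p q : 'rV['F_2]_n) : 'rV['F_2]_n :=
  \row_(k < n) \sum_(i < n) \sum_(j < n | ((i + j) %% n)%N == k) p 0 i * q 0 j.

Definition xpow (n : nat) (i : 'I_n) : 'rV['F_2]_n := \row_(j < n) (j == i)%:R.

Definition xinvpow (n : nat) (i : 'I_n) : 'rV['F_2]_n :=
  \row_(j < n) (((i + j) %% n)%N == 0%N)%:R.

Definition recip (n : nat) (p : 'rV['F_2]_n) : 'rV['F_2]_n :=
  \sum_(i < n) p 0 i *: xinvpow i.

(* A vector m(x) + omega n(x) of F_4^n is represented by the binary row
   vector row_mx m n : 'rV['F_2]_(n+n) (left half = m, right half = n). *)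
Definition f4vec (n : nat) (m v : 'rV['F_2]_n) : 'rV['F_2]_(n + n) := row_mx m v.

Definition cyc_code (n : nat) (a b : 'rV['F_2]_n) : {vspace 'rV['F_2]_(n + n)} :=
  <<[seq f4vec (cmul (xpow i) a) (cmul (xpow i) b) | i <- enum 'I_n]>>%VS.

Definition recip_code (n : nat) (a b : 'rV['F_2]_n) : {vspace 'rV['F_2]_(n + n)} :=
  cyc_code (recip a) (recip b).

Definition symp (n : nat) (v w : 'rV['F_2]_(n + n)) : 'F_2 :=
  \sum_(i < n) (lsubmx v 0 i * rsubmx w 0 i + rsubmx v 0 i * lsubmx w 0 i).

Definition sdual (n : nat) (D : {vspace 'rV['F_2]_(n + n)}) : pred 'rV['F_2]_(n + n) :=
  [pred v | [forall w, (w \in D) ==> (symp v w == 0)]].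

Definition wtF4 (n : nat) (v : 'rV['F_2]_(n + n)) : nat :=
  #|[set i : 'I_n | (lsubmx v 0 i != 0) || (rsubmx v 0 i != 0)]|.

Definition wt2 (N : nat) (v : 'rV['F_2]_N) : nat := #|[set i : 'I_N | v 0 i != 0]|.

(* minimum weight of a nonzero element of S; the value (n+n).+1, exceeding
   every possible weight, plays the role of +infinity for empty sets *)
Definition dF4 (n : nat) (S : pred 'rV['F_2]_(n + n)) : nat :=
  \big[minn/(n + n).+1]_(v | (v \in S) && (v != 0)) wtF4 v.

Definition dot (N : nat) (v w : 'rV['F_2]_N) : 'F_2 := \sum_(i < N) v 0 i * w 0 i.

Definition GB_X (n : nat) (a b : 'rV['F_2]_n) : {vspace 'rV['F_2]_(n + n)} :=
  <<[seq row_mx (cmul c a) (cmul c b) | c : 'rV['F_2]_n]>>%VS.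

Definition GB_Z (n : nat) (a b : 'rV['F_2]_n) : {vspace 'rV['F_2]_(n + n)} :=
  <<[seq row_mx (cmul c (recip b)) (cmul c (recip a)) | c : 'rV['F_2]_n]>>%VS.

Definition css_K (N : nat) (SX SZ : {vspace 'rV['F_2]_N}) : nat :=
  (N - \dim SX - \dim SZ)%N.

Definition logX (N : nat) (SX SZ : {vspace 'rV['F_2]_N}) : pred 'rV['F_2]_N :=
  [pred v | [forall w, (w \in SZ) ==> (dot v w == 0)] && (v \notin SX)].
Definition logZ (N : nat) (SX SZ : {vspace 'rV['F_2]_N}) : pred 'rV['F_2]_N :=
  [pred v | [forall w, (w \in SX) ==> (dot v w == 0)] && (v \notin SZ)].

(* minimum distance of the CSS code (value N.+1 = +infinity if no logical
   operator exists) *)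
Definition css_dist (N : nat) (SX SZ : {vspace 'rV['F_2]_N}) : nat :=
  minn (\big[minn/N.+1]_(v | v \in logX SX SZ) wt2 v)
       (\big[minn/N.+1]_(v | v \in logZ SX SZ) wt2 v).

(* The X-stabilizer space {(c a, c b)} of the GB code is the code C itself, and the
   involution (u, v) |-> (v(x^-1), u(x^-1)) maps it bijectively onto the Z-stabilizer
   space {(c b(x^-1), c a(x^-1))}; hence both have dimension k and K = 2n - 2k.  The two
   spaces are orthogonal because <(c a, c b), (d b(x^-1), d a(x^-1))> is the constant
   coefficient of c d a b + c d b a = 0.  Symplectic orthogonality to a word
   (c a(x^-1), c b(x^-1)) of C^R is ordinary orthogonality to the Z-stabilizer
   (c b(x^-1), c a(x^-1)), so every logical X operator lies in (C^R)^{perp_s} \ C; the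
   involution carries logical Z operators to logical X operators and preserves the
   F_4-weight, which never exceeds the binary weight. *)

From HB Require Import structures.
From mathcomp Require Import all_boot all_order all_algebra all_field zify.
Set Implicit Arguments.
Unset Strict Implicit.
Unset Printing Implicit Defensive.

Import Order.TTheory GRing.Theory.
Local Open Scope ring_scope.

Section LinearImage.
Variables (K : finFieldType) (m : nat) (vT : vectType K).
Variable f : 'rV[K]_m -> vT.
Hypothesis f_linear : linear f.

Lemma linear0_of : f 0 = 0.
Proof.
have -> : 0 = - 1 *: 0 + 0 :> 'rV[K]_m by rewrite scaler0 addr0.
by rewrite f_linear scaleN1r addNr.
Qed.

Lemma linearD_of c d : f (c + d) = f c + f d.
Proof. by rewrite -[c]scale1r f_linear !scale1r. Qed.

Lemma linearZ_of x c : f (x *: c) = x *: f c.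
Proof. by rewrite -[x *: c]addr0 f_linear linear0_of addr0. Qed.

Lemma memv_span_map X c : c \in <<X>>%VS -> f c \in <<map f X>>%VS.
Proof.
move=> cX; rewrite (coord_span (X := in_tuple X) cX); elim/big_ind: _ => [||i _].
- by rewrite linear0_of mem0v.
- by move=> c1 c2 fc1 fc2; rewrite linearD_of memvD.
rewrite linearZ_of memvZ // memv_span //.
by apply: map_f; apply: mem_nth.
Qed.

Lemma memv_span_imageP v :
  reflect (exists c, v = f c) (v \in <<[seq f c | c : 'rV[K]_m]>>%VS).
Proof.
apply: (iffP idP) => [vS | [c ->]]; last exact/memv_span/image_f.
rewrite (coord_span (X := in_tuple _) vS); elim/big_ind: _ => [||i _].
- by exists 0; rewrite linear0_of.
- by move=> _ _ [c1 ->] [c2 ->]; exists (c1 + c2); rewrite linearD_of.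
have /imageP [c _ ->] := mem_nth 0 (ltn_ord i).
by rewrite -linearZ_of; eexists.
Qed.

End LinearImage.

Lemma dimv_leq_inj (K : finFieldType) m (U V : {vspace 'rV[K]_m})
    (f : 'rV[K]_m -> 'rV[K]_m) :
  injective f -> (forall v, v \in U -> f v \in V) -> (\dim U <= \dim V)%N.
Proof.
move=> f_inj fUV; have : (#|U| <= #|V|)%N.
  rewrite -(card_imset (mem U) f_inj); apply: subset_leq_card.
  by apply/subsetP => _ /imsetP [v vU ->]; apply: fUV.
by rewrite !card_vspace leq_exp2l // card_finNzRing_gt1.
Qed.

Lemma bigmin_leq_bigmin (I J : finType) (P : pred I) (Q : pred J)
    (F : I -> nat) (G : J -> nat) m :
  (forall j, Q j -> exists2 i, P i & (F i <= G j)%N) ->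
  (\big[minn/m]_(i | P i) F i <= \big[minn/m]_(j | Q j) G j)%N.
Proof.
move=> QP; rewrite -minEnat -leEnat; apply: le_bigmin; first exact: bigmin_le_id.
move=> j /QP [i Pi FG]; exact: (bigmin_inf i P (G j) F Pi FG).
Qed.

Lemma dF4_subset N (S T : pred 'rV['F_2]_(N + N)) :
  {subset T <= S} -> (dF4 S <= dF4 T)%N.
Proof.
move=> TS; apply: bigmin_leq_bigmin => v /andP [vT v0].
by exists v; rewrite ?TS.
Qed.

Lemma dot_row_mx N (v : 'rV['F_2]_(N + N)) x y :
  dot v (row_mx x y) = dot (lsubmx v) x + dot (rsubmx v) y.
Proof.
rewrite /dot big_split_ord /=; congr (_ + _); apply: eq_bigr => i _.
  by rewrite row_mxEl mxE.
by rewrite row_mxEr mxE.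
Qed.

Lemma symp_dot N (v w : 'rV['F_2]_(N + N)) :
  symp v w = dot v (row_mx (rsubmx w) (lsubmx w)).
Proof. by rewrite dot_row_mx /symp /dot big_split. Qed.

Lemma wt2_row_mx N (x y : 'rV['F_2]_N) : wt2 (row_mx x y) = (wt2 x + wt2 y)%N.
Proof.
rewrite /wt2 -!sum1dep_card big_split_ord /=.
by congr (_ + _); apply: eq_bigl => i; rewrite ?row_mxEl ?row_mxEr.
Qed.

Lemma wtF4_leq_wt2 N (v : 'rV['F_2]_(N + N)) : (wtF4 v <= wt2 v)%N.
Proof.
rewrite -{2}(hsubmxK v) wt2_row_mx /wtF4 /wt2.
have -> : [set i | (lsubmx v 0 i != 0) || (rsubmx v 0 i != 0)] =
          [set i | lsubmx v 0 i != 0] :|: [set i | rsubmx v 0 i != 0].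
  by apply/setP => i; rewrite !inE.
exact: leq_card_setU.
Qed.

Section CyclicRing.
Variable n : nat.
(* 'I_n.+1 is Z/(n+1): index arithmetic mod N in cmul and recip is addition in 'I_N. *)
Local Notation N := n.+1.
Implicit Types p q r c a b : 'rV['F_2]_N.

Lemma cmulE p q k : cmul p q 0 k = \sum_i p 0 i * q 0 (k - i).
Proof.
rewrite mxE; apply: eq_bigr => i _; rewrite (big_pred1 (k - i)) // => j /=.
have -> : (((i + j) %% N)%N == k) = ((i + j)%R == k) by [].
by rewrite [RHS]eq_sym subr_eq eq_sym addrC.
Qed.

Lemma recipE p j : recip p 0 j = p 0 (- j).
Proof.
have addj_eq0 (i : 'I_N) : (((i + j) %% N)%N == 0%N) = ((i + j)%R == 0) by [].
rewrite /recip summxE (bigD1 (- j)) //= big1 => [|i ij]; rewrite !mxE addj_eq0.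
  by rewrite addNr eqxx mulr1 addr0.
by rewrite addr_eq0 (negbTE ij) mulr0.
Qed.

Lemma cmulC p q : cmul p q = cmul q p.
Proof.
apply/rowP => k; rewrite !cmulE (reindex_inj (inv_inj (subKr k))) /=.
by apply: eq_bigr => i _; rewrite subKr mulrC.
Qed.

Lemma cmulA p q r : cmul (cmul p q) r = cmul p (cmul q r).
Proof.
apply/rowP => k; rewrite !cmulE.
under eq_bigr do rewrite cmulE mulr_suml.
rewrite exchange_big /=; apply: eq_bigr => j _.
rewrite cmulE mulr_sumr (reindex_inj (addIr j)) /=.
apply: eq_bigr => i _; rewrite addrK mulrA; congr (_ * r 0 _).
by rewrite opprD addrA addrAC.
Qed.

Lemma cmulCA p q r : cmul p (cmul q r) = cmul q (cmul p r).
Proof. by rewrite -!cmulA (cmulC p q). Qed.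

Lemma cmul_linear q : linear (fun p : 'rV['F_2]_N => cmul p q).
Proof.
move=> x p p'; apply/rowP => k.
rewrite [RHS]mxE [in RHS]mxE !cmulE mulr_sumr -big_split /=.
by apply: eq_bigr => i _; rewrite !mxE mulrDl mulrA.
Qed.

Lemma recipK : involutive (@recip N).
Proof. by move=> p; apply/rowP => k; rewrite !recipE opprK. Qed.

Lemma recip_cmul p q : recip (cmul p q) = cmul (recip p) (recip q).
Proof.
apply/rowP => k; rewrite recipE !cmulE (reindex_inj oppr_inj) /=.
by apply: eq_bigr => i _; rewrite !recipE opprK opprB addrC.
Qed.

Lemma dot_cmul_recip p q : dot p q = cmul p (recip q) 0 0.
Proof. by rewrite cmulE; apply: eq_bigr => i _; rewrite recipE sub0r opprK. Qed.

Lemma dot_recip p q : dot (recip p) q = dot p (recip q).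
Proof.
by rewrite !dot_cmul_recip recipK -recip_cmul recipE oppr0.
Qed.

End CyclicRing.

Definition swap_recip N (v : 'rV['F_2]_(N + N)) : 'rV['F_2]_(N + N) :=
  row_mx (recip (rsubmx v)) (recip (lsubmx v)).

Section GeneralizedBicycle.
Variables (n : nat) (a b : 'rV['F_2]_n.+1).
Local Notation N := n.+1.

Lemma swap_recipK : involutive (@swap_recip N).
Proof. by move=> v; rewrite /swap_recip row_mxKl row_mxKr !recipK hsubmxK. Qed.

Lemma wtF4_swap_recip (v : 'rV['F_2]_(N + N)) : wtF4 (swap_recip v) = wtF4 v.
Proof.
rewrite /wtF4 -(card_preimset _ (@oppr_inj _ : injective (fun i : 'I_N => - i))).
apply: eq_card => i; rewrite !inE /swap_recip row_mxKl row_mxKr !recipE.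
by rewrite opprK orbC.
Qed.

Lemma row_cmul_linear p q :
  linear (fun c : 'rV['F_2]_N => row_mx (cmul c p) (cmul c q)).
Proof. by move=> x c d; rewrite !cmul_linear scale_row_mx add_row_mx. Qed.

Lemma memGB_XP v :
  reflect (exists c, v = row_mx (cmul c a) (cmul c b)) (v \in GB_X a b).
Proof. exact/memv_span_imageP/row_cmul_linear. Qed.

Lemma memGB_ZP v :
  reflect (exists c, v = row_mx (cmul c (recip b)) (cmul c (recip a)))
          (v \in GB_Z a b).
Proof. exact/memv_span_imageP/row_cmul_linear. Qed.

Lemma memv_span_xpow c : c \in <<[seq xpow i | i <- enum 'I_N]>>%VS.
Proof.
have -> : c = \sum_i c 0 i *: xpow i.
  apply/rowP => j; rewrite summxE (bigD1 j) //= big1 => [|i ij]; rewrite !mxE.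
    by rewrite eqxx mulr1 addr0.
  by rewrite eq_sym (negbTE ij) mulr0.
apply: rpred_sum => i _; apply/memvZ/memv_span.
by rewrite map_f ?mem_enum.
Qed.

Lemma cyc_code_GB_X : cyc_code a b = GB_X a b.
Proof.
apply/eqP; rewrite eqEsubv; apply/andP; split; apply/span_subvP => w.
  by case/mapP => i _ ->; apply/memGB_XP; exists (xpow i).
case/imageP => c _ ->; rewrite /cyc_code.
have := memv_span_map (row_cmul_linear a b) (memv_span_xpow c).
by rewrite -map_comp.
Qed.

Lemma swap_recip_GB_X v : v \in GB_X a b -> swap_recip v \in GB_Z a b.
Proof.
case/memGB_XP => c ->; apply/memGB_ZP; exists (recip c).
by rewrite /swap_recip row_mxKl row_mxKr !recip_cmul.
Qed.

Lemma swap_recip_GB_Z v : v \in GB_Z a b -> swap_recip v \in GB_X a b.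
Proof.
case/memGB_ZP => c ->; apply/memGB_XP; exists (recip c).
by rewrite /swap_recip row_mxKl row_mxKr !recip_cmul !recipK.
Qed.

Lemma dim_GB_Z : \dim (GB_Z a b) = \dim (GB_X a b).
Proof.
have swap_inj := can_inj swap_recipK.
apply/eqP; rewrite eqn_leq !(dimv_leq_inj swap_inj) //.
  exact: swap_recip_GB_X.
exact: swap_recip_GB_Z.
Qed.

Lemma dot_GB_X_GB_Z v w : v \in GB_X a b -> w \in GB_Z a b -> dot v w = 0.
Proof.
case/memGB_XP => c ->; case/memGB_ZP => d ->.
rewrite dot_row_mx row_mxKl row_mxKr !dot_cmul_recip !recip_cmul !recipK.
rewrite !cmulA (cmulCA a) (cmulCA b) (cmulC b a).
exact/addrr_pchar2/pchar_Fp.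
Qed.

End GeneralizedBicycle.

Section LogicalOperators.
Variables (n : nat) (a b : 'rV['F_2]_n.+1).
Local Notation N := n.+1.

Lemma dot_swap_recip (v w : 'rV['F_2]_(N + N)) :
  dot (swap_recip v) w = dot v (swap_recip w).
Proof.
rewrite -{1}(hsubmxK w) !dot_row_mx /swap_recip row_mxKl row_mxKr.
by rewrite !dot_recip addrC.
Qed.

Lemma symp_recip_code v w :
  w \in recip_code a b -> symp v w = dot v (row_mx (rsubmx w) (lsubmx w)) /\
                          row_mx (rsubmx w) (lsubmx w) \in GB_Z a b.
Proof.
rewrite /recip_code cyc_code_GB_X => /memGB_XP [c ->].
split; first exact: symp_dot.
by rewrite row_mxKl row_mxKr; apply/memGB_ZP; exists c.
Qed.

Lemma logX_sdual v : v \in logX (GB_X a b) (GB_Z a b) ->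
  (v \in sdual (recip_code a b)) && (v \notin cyc_code a b).
Proof.
case/andP => /forallP v_orth vX; rewrite cyc_code_GB_X vX andbT.
apply/forallP => w; apply/implyP => /(symp_recip_code v) [-> wZ].
exact: (implyP (v_orth _)).
Qed.

Lemma logZ_swap_recip v : v \in logZ (GB_X a b) (GB_Z a b) ->
  swap_recip v \in logX (GB_X a b) (GB_Z a b).
Proof.
case/andP => /forallP v_orth vZ; apply/andP; split.
  apply/forallP => w; apply/implyP => wZ; rewrite dot_swap_recip.
  exact/(implyP (v_orth _))/swap_recip_GB_Z.
by apply: contra vZ => /swap_recip_GB_X; rewrite swap_recipK.
Qed.

Lemma dF4_leq_css_dist :
  (dF4 [pred v | (v \in sdual (recip_code a b)) && (v \notin cyc_code a b)]
     <= css_dist (GB_X a b) (GB_Z a b))%N.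
Proof.
have logX_mem u : u \in logX (GB_X a b) (GB_Z a b) ->
    (u \in [pred v | (v \in sdual (recip_code a b)) && (v \notin cyc_code a b)])
    && (u != 0).
  move=> uL; rewrite inE logX_sdual //=.
  by case/andP: uL => _; apply: contraNneq => ->; apply: mem0v.
rewrite /css_dist leq_min; apply/andP; split; apply: bigmin_leq_bigmin => v vL.
  by exists v; [apply: logX_mem | apply: wtF4_leq_wt2].
exists (swap_recip v); first exact/logX_mem/logZ_swap_recip.
by rewrite wtF4_swap_recip wtF4_leq_wt2.
Qed.

End LogicalOperators.

Theorem theorem2 (n : nat) (a b : 'rV['F_2]_n) (k : nat) :
  (0 < n)%N ->
  \dim (cyc_code a b) = k ->
  (* the GB code defined by a, b is a valid CSS (stabilizer) code on 2n qubits *)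
  (forall v w, v \in GB_X a b -> w \in GB_Z a b -> dot v w = 0) /\
  (* with 2(n-k) logical qubits *)
  css_K (GB_X a b) (GB_Z a b) = (2 * (n - k))%N /\
  (* and minimum distance d >= d((C^R)^{perp_s} \ C) >= d((C^R)^{perp_s}) *)
  (dF4 [pred v | (v \in sdual (recip_code a b)) && (v \notin cyc_code a b)]
     <= css_dist (GB_X a b) (GB_Z a b))%N /\
  (dF4 (sdual (recip_code a b))
     <= dF4 [pred v | (v \in sdual (recip_code a b)) && (v \notin cyc_code a b)])%N /\
  (* palindromic case *)
  (recip_code a b = cyc_code a b ->
     (dF4 [pred v | (v \in sdual (cyc_code a b)) && (v \notin cyc_code a b)]
        <= css_dist (GB_X a b) (GB_Z a b))%N /\
     (dF4 (sdual (cyc_code a b))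
        <= dF4 [pred v | (v \in sdual (cyc_code a b)) && (v \notin cyc_code a b)])%N).
Proof.
case: n a b => [//|n] a b _ dim_C.
have sdual_diff_subset S :
    {subset [pred v | (v \in sdual S) && (v \notin cyc_code a b)] <= sdual S}.
  by move=> v /andP [].
split; first exact: dot_GB_X_GB_Z.
split; first by rewrite /css_K dim_GB_Z -cyc_code_GB_X dim_C; lia.
split; first exact: dF4_leq_css_dist.
split; first exact/dF4_subset/sdual_diff_subset.
move=> palindromic; split; last exact/dF4_subset/sdual_diff_subset.
by have := dF4_leq_css_dist a b; rewrite palindromic.
Qed.
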